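(* Assume Assumption A holds, and let $\mu\in\mathcal{M}$. Then there exists an $S$-valued process $(\mathbf{t}_n)_{n\ge1}$, possibly defined on an enlargement of the probability space carrying the state process $(\mathbf{s}_n)_{n\ge1}$, such that: (P1) for every $n$, conditional on $\mathbf{s}_n$, the vector $(\mathbf{t}_1,\dots,\mathbf{t}_n)$ is independent of $(\mathbf{s}_{n+1},\mathbf{s}_{n+2},\dots)$; (P2) the law of the sequence $(\mathbf{t}_n)_n$ equals the law of the sequence $(\mathbf{s}_n)_n$; (P3) for each $n$, the law of the pair $(\mathbf{s}_n,\mathbf{t}_n)$ is $\mu$; (P4) for each $n$, the conditional law of $\mathbf{s}_n$ given $(\mathbf{t}_1,\dots,\mathbf{t}_n)$ is $\mu(\cdot\mid\mathbf{t}_n)$.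
   Context: $S$ is a finite set; $(\mathbf{s}_n)_{n\ge1}$ is an irreducible aperiodic Markov chain on $S$ with transition function $p(\cdot\mid\cdot)$, invariant measure $m$ (with full support), and $\mathbf{s}_1\sim m$. Assumption A: there exist nonnegative numbers $\alpha_s$, $s\in S$, with $\sum_{s\in S\setminus\{\bar s\}}\alpha_s\le1$ for every $\bar s\in S$, such that $p(s'\mid s)=\alpha_{s'}$ whenever $s'\neq s$. $\mathcal{M}$ is the set of probability distributions $\mu$ on $S\times S$ both of whose marginals equal $m$; $\mu(s\mid t)=\mu(s,t)/m(t)$. *)

From HB Require Import structures.
From mathcomp Require Import all_boot all_order all_algebra.
From mathcomp Require Import reals.
Set Implicit Arguments. Unset Strict Implicit. Unset Printing Implicit Defensive.
Import Order.TTheory GRing.Theory Num.Theory.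
Local Open Scope ring_scope.

Section Defs.
Variables (R : realType) (S : finType).

(* Convention: [p x y] is the transition probability p(y | x). *)
Definition stochastic (p : S -> S -> R) :=
  (forall x y, 0 <= p x y) /\ (forall x, \sum_(y : S) p x y = 1).

Fixpoint npow (p : S -> S -> R) (n : nat) (x y : S) : R :=
  match n with
  | 0 => (x == y)%:R
  | k.+1 => \sum_(z : S) npow p k x z * p z y
  end.

Definition irreducible (p : S -> S -> R) :=
  forall x y, exists n, 0 < npow p n x y.

Definition aperiodic (p : S -> S -> R) :=
  forall x (d : nat), (forall n, (0 < n)%N -> 0 < npow p n x x -> (d %| n)%N) -> d = 1%N.

Definition invariant_measure (p : S -> S -> R) (m : S -> R) :=
  (forall x, 0 <= m x) /\ \sum_(x : S) m x = 1 /\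
  (forall y, \sum_(x : S) m x * p x y = m y).

Definition full_support (m : S -> R) := forall x, 0 < m x.

Definition assumptionA (p : S -> S -> R) :=
  exists alpha : S -> R,
    (forall s, 0 <= alpha s) /\
    (forall sbar, \sum_(s : S | s != sbar) alpha s <= 1) /\
    (forall s s', s' != s -> p s s' = alpha s').

Definition in_M (m : S -> R) (mu : S -> S -> R) :=
  (forall x y, 0 <= mu x y) /\
  (forall x, \sum_(y : S) mu x y = m x) /\
  (forall y, \sum_(x : S) mu x y = m y).

Definition mu_cond (m : S -> R) (mu : S -> S -> R) (s t : S) : R := mu s t / m t.

Fixpoint chain_from (p : S -> S -> R) (x : S) (r : seq S) : R :=
  match r with
  | [::] => 1
  | y :: r' => p x y * chain_from p y r'
  end.

Definition path_prob (p : S -> S -> R) (m : S -> R) (r : seq S) : R :=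
  match r with
  | [::] => 1
  | x :: r' => m x * chain_from p x r'
  end.

Definition markov_law (p : S -> S -> R) (m : S -> R) (N : nat)
  (x : {ffun 'I_N -> S}) : R := path_prob p m [seq x i | i <- enum 'I_N].

(* A joint law of the pair process (s_n, t_n)_{n>=1} given through its
   finite-dimensional distributions: q N w = P((s_k, t_k)_{k < N} = w)
   (indices shifted by one: index 0 is time 1). *)
Definition joint_fdd := forall N : nat, {ffun 'I_N -> S * S} -> R.

Definition Pr (q : joint_fdd) (N : nat) (E : pred {ffun 'I_N -> S * S}) : R :=
  \sum_(w : {ffun 'I_N -> S * S} | E w) q N w.

Definition is_consistent_law (q : joint_fdd) :=
  (forall N w, 0 <= q N w) /\
  (forall N (w : {ffun 'I_N -> S * S}),
     q N w = Pr q [pred w' : {ffun 'I_N.+1 -> S * S} |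
                   [forall i : 'I_N, w' (widen_ord (leqnSn N) i) == w i]]).

End Defs.

From mathcomp Require Import all_boot all_order all_algebra.
From mathcomp Require Import reals.
From mathcomp Require Import ring lra.
Set Implicit Arguments. Unset Strict Implicit. Unset Printing Implicit Defensive.
Import Order.TTheory GRing.Theory Num.Theory.
Local Open Scope ring_scope.

(* The pair process (s_n, t_n) is a Markov chain on S x S started from mu: s moves
   by p, and the new t' is drawn, given the old t and the new s', with probability
   proportional to m(t) p(t, t') mu(s', t') / m(t').  Assumption A says that
   p = beta m + (1 - beta) Id (given that m is invariant), which makes the normaliser equal to
   sum_x mu(x, t) p(x, s') = P(t_n = t, s_{n+1} = s').  This identity gives the
   invariance of mu under the pair kernel (P3) and, by forward induction,
   P(t_1 .. t_n, s_n = s) = P_m(t_1 .. t_n) mu(s | t_n), whence (P2) and (P4).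
   Summing out t' leaves the kernel p for s, whence the law of (s_n) and (P1). *)

Lemma sum_indicator (R : nzRingType) (I : finType) (a : I) (F : I -> R) :
  \sum_x (x == a)%:R * F x = F a.
Proof.
under eq_bigr do rewrite mulr_natl mulrb.
by rewrite -big_mkcond big_pred1_eq.
Qed.

Lemma sum_pair (R : nmodType) (S T : finType) (F : S * T -> R) :
  \sum_z F z = \sum_s \sum_t F (s, t).
Proof. by rewrite pair_bigA; apply: eq_bigr => -[]. Qed.

Lemma forall_at n (i : 'I_n) (Q : pred 'I_n) : Q i = [forall j, (j == i) ==> Q j].
Proof.
apply/idP/forallP => [Qi j|H]; first by apply/implyP => /eqP ->.
by have /implyP := H i; apply.
Qed.

Lemma forall_andb (I : finType) (P Q : pred I) :
  [forall j, P j] && [forall j, Q j] = [forall j, P j && Q j].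
Proof.
apply/andP/forallP => [[/forallP P1 /forallP Q1] j|PQ]; first by rewrite P1 Q1.
by split; apply/forallP => j; case/andP: (PQ j).
Qed.

Lemma codom_inord (T : Type) n (x : {ffun 'I_n.+1 -> T}) :
  codom x = [seq x (inord k) | k <- iota 0 n.+1].
Proof.
rewrite /codom /image_mem -val_enum_ord -map_comp.
by apply: eq_map => i /=; rewrite inord_val.
Qed.

Section RconsFfun.
Variable T : Type.

Definition rcons_ffun n (w : {ffun 'I_n -> T}) (z : T) : {ffun 'I_n.+1 -> T} :=
  [ffun i => if unlift ord_max i is Some j then w j else z].

Definition belast_ffun n (w : {ffun 'I_n.+1 -> T}) : {ffun 'I_n -> T} :=
  [ffun i => w (widen_ord (leqnSn n) i)].

Lemma widen_ord_lift n (i : 'I_n) : widen_ord (leqnSn n) i = lift ord_max i.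
Proof. by apply: val_inj; rewrite [RHS]lift_max. Qed.

Lemma rcons_ffun_lift n (w : {ffun 'I_n -> T}) z i : rcons_ffun w z (lift ord_max i) = w i.
Proof. by rewrite ffunE liftK. Qed.

Lemma rcons_ffun_widen n (w : {ffun 'I_n -> T}) z i :
  rcons_ffun w z (widen_ord (leqnSn n) i) = w i.
Proof. by rewrite widen_ord_lift rcons_ffun_lift. Qed.

Lemma rcons_ffun_max n (w : {ffun 'I_n -> T}) z : rcons_ffun w z ord_max = z.
Proof. by rewrite ffunE unlift_none. Qed.

Lemma belast_rcons_ffun n (w : {ffun 'I_n -> T}) z : belast_ffun (rcons_ffun w z) = w.
Proof. by apply/ffunP => i; rewrite ffunE rcons_ffun_widen. Qed.

Lemma rcons_belast_ffun n (w : {ffun 'I_n.+1 -> T}) :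
  rcons_ffun (belast_ffun w) (w ord_max) = w.
Proof.
apply/ffunP => i; rewrite ffunE; case: unliftP => [j ->|->] //.
by rewrite ffunE widen_ord_lift.
Qed.

Lemma codom_rcons_ffun n (w : {ffun 'I_n -> T}) z :
  codom (rcons_ffun w z) = rcons (codom w) z.
Proof.
rewrite /codom /image_mem enum_ordSr map_rcons -map_comp rcons_ffun_max.
by congr rcons; apply: eq_map => i /=; rewrite rcons_ffun_widen.
Qed.

Lemma forall_rcons_ffun n (A : nat -> pred T) (w : {ffun 'I_n -> T}) z :
  [forall i : 'I_n.+1, rcons_ffun w z i \in A i] =
  [forall i : 'I_n, w i \in A i] && (z \in A n).
Proof.
apply/forallP/andP => [Aw|[/forallP Aw Az] i].
  split; last by have := Aw ord_max; rewrite rcons_ffun_max.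
  by apply/forallP => i; have := Aw (lift ord_max i); rewrite rcons_ffun_lift lift_max.
case: (unliftP ord_max i) => [j ->|->]; last by rewrite rcons_ffun_max.
by rewrite rcons_ffun_lift lift_max.
Qed.

End RconsFfun.

Lemma big_ffunS (R : nmodType) (T : finType) n (F : {ffun 'I_n.+1 -> T} -> R) :
  \sum_(w : {ffun 'I_n.+1 -> T}) F w =
  \sum_(w : {ffun 'I_n -> T}) \sum_(z : T) F (rcons_ffun w z).
Proof.
rewrite pair_big /= (reindex (fun wz : {ffun 'I_n -> T} * T => rcons_ffun wz.1 wz.2)) //=.
exists (fun w => (belast_ffun w, w ord_max)) => [[w z] _ | w _] /=.
  by rewrite belast_rcons_ffun rcons_ffun_max.
by rewrite rcons_belast_ffun.
Qed.

Lemma big_ffun0 (R : nmodType) (T : finType) (F : {ffun 'I_0 -> T} -> R) w0 :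
  \sum_(w : {ffun 'I_0 -> T}) F w = F w0.
Proof. by rewrite (bigD1 w0) //= big1 ?addr0 // => w /eqP[]; apply/ffunP => -[]. Qed.

Lemma chain_from_rcons (R : realType) (T : finType) (P : T -> T -> R) x r y :
  chain_from P x (rcons r y) = chain_from P x r * P (last x r) y.
Proof.
elim: r x => [|a r IHr] x /=; first by rewrite mulr1 mul1r.
by rewrite IHr mulrA.
Qed.

Lemma path_prob_rcons (R : realType) (T : finType) (P : T -> T -> R) (f : T -> R) s y z :
  path_prob P f (rcons (rcons s y) z) = path_prob P f (rcons s y) * P y z.
Proof.
case: s => [|x s] /=; first by rewrite !mulr1.
by rewrite chain_from_rcons last_rcons mulrA.
Qed.

Section ChainLaw.
Variables (R : realType) (T : finType) (f : T -> R) (K : T -> T -> R).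

Definition chain_mass N (w : {ffun 'I_N -> T}) : R := path_prob K f (codom w).

Lemma chain_mass_rcons0 (w : {ffun 'I_0 -> T}) z : chain_mass (rcons_ffun w z) = f z.
Proof. by rewrite /chain_mass codom_rcons_ffun /codom /image_mem enum_ord0 /= mulr1. Qed.

Lemma chain_mass_rcons n (w : {ffun 'I_n.+1 -> T}) z :
  chain_mass (rcons_ffun w z) = chain_mass w * K (w ord_max) z.
Proof.
rewrite /chain_mass codom_rcons_ffun -{1}(rcons_belast_ffun w) codom_rcons_ffun.
by rewrite path_prob_rcons -codom_rcons_ffun rcons_belast_ffun.
Qed.

(* [pre_fwd A n z] is the mass of the paths that meet the constraints [A 0], ...,
   [A n.-1] and sit at [z] at time [n]; [fwd] also imposes [A n]. *)
Fixpoint pre_fwd (A : nat -> pred T) n z : R :=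
  if n is k.+1 then \sum_y (y \in A k)%:R * pre_fwd A k y * K y z else f z.

Definition fwd (A : nat -> pred T) n z := (z \in A n)%:R * pre_fwd A n z.

Lemma fwd0 (A : nat -> pred T) z : fwd A 0 z = (z \in A 0)%:R * f z.
Proof. by []. Qed.

Lemma fwdS (A : nat -> pred T) n z :
  fwd A n.+1 z = (z \in A n.+1)%:R * \sum_y fwd A n y * K y z.
Proof. by []. Qed.

Lemma sum_chain_mass_rect (A : nat -> pred T) n (G : T -> R) :
  \sum_(w : {ffun 'I_n.+1 -> T} | [forall i, w i \in A i]) chain_mass w * G (w ord_max) =
  \sum_z fwd A n z * G z.
Proof.
elim: n G => [|n IHn] G.
  rewrite big_mkcond big_ffunS (big_ffun0 _ (ffun0 (card_ord 0))) /=.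
  apply: eq_bigr => z _; rewrite forall_rcons_ffun rcons_ffun_max chain_mass_rcons0.
  have -> : [forall i, ffun0 (card_ord 0) i \in A i] by apply/forallP => -[].
  by rewrite fwd0; case: (z \in A 0); rewrite /= ?mul1r ?mul0r.
rewrite big_mkcond big_ffunS.
transitivity (\sum_(w : {ffun 'I_n.+1 -> T} | [forall i, w i \in A i])
   chain_mass w * \sum_z (z \in A n.+1)%:R * K (w ord_max) z * G z).
  rewrite [RHS]big_mkcond; apply: eq_bigr => w _.
  case: ifP => Aw; last by apply: big1 => z _; rewrite forall_rcons_ffun Aw.
  rewrite big_distrr; apply: eq_bigr => z _.
  rewrite forall_rcons_ffun Aw /= chain_mass_rcons rcons_ffun_max.
  by case: (z \in A n.+1) => /=; ring.
rewrite (IHn (fun y => \sum_z (z \in A n.+1)%:R * K y z * G z)).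
under eq_bigr do rewrite big_distrr.
rewrite exchange_big; apply: eq_bigr => z _ /=.
rewrite fwdS big_distrr big_distrl /=; apply: eq_bigr => y _.
ring.
Qed.

Lemma sum_chain_mass_rect1 (A : nat -> pred T) n :
  \sum_(w : {ffun 'I_n.+1 -> T} | [forall i, w i \in A i]) chain_mass w = \sum_z fwd A n z.
Proof.
have := sum_chain_mass_rect A n (fun _ => 1).
by under eq_bigr do rewrite mulr1; under [in X in _ = X -> _]eq_bigr do rewrite mulr1.
Qed.

Lemma pre_fwd_local (A A' : nat -> pred T) n :
  (forall k, (k < n)%N -> A k =i A' k) -> pre_fwd A n =1 pre_fwd A' n.
Proof.
elim: n => [|n IHn] AA' z //=; apply: eq_bigr => y _.
by rewrite AA' // IHn // => k lt_kn; apply: AA'; rewrite ltnW.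
Qed.

Hypothesis K_ge0 : forall y z, 0 <= K y z.
Hypothesis f_ge0 : forall z, 0 <= f z.
Hypothesis K_sum1 : forall y, \sum_z K y z = 1.
Hypothesis f_sum1 : \sum_z f z = 1.
Hypothesis f_stationary : forall z, \sum_y f y * K y z = f z.

Lemma chain_mass_ge0 N (w : {ffun 'I_N -> T}) : 0 <= chain_mass w.
Proof.
have chain_ge0 x r : 0 <= chain_from K x r.
  by elim: r x => [|y r IHr] x //=; rewrite mulr_ge0.
by rewrite /chain_mass; case: (codom w) => [|x r] //=; rewrite mulr_ge0.
Qed.

Lemma chain_mass_consistent N (w : {ffun 'I_N -> T}) :
  chain_mass w = \sum_(w' : {ffun 'I_N.+1 -> T} |
                      [forall i, w' (widen_ord (leqnSn N) i) == w i]) chain_mass w'.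
Proof.
transitivity (\sum_(w' : {ffun 'I_N -> T}) (w' == w)%:R * \sum_z chain_mass (rcons_ffun w' z)).
  rewrite sum_indicator; case: N w => [|n] w.
    under eq_bigr do rewrite chain_mass_rcons0.
    by rewrite f_sum1 /chain_mass /codom /image_mem enum_ord0.
  under eq_bigr do rewrite chain_mass_rcons.
  by rewrite -big_distrr /= K_sum1 mulr1.
rewrite [RHS]big_mkcond big_ffunS; apply: eq_bigr => w' _.
rewrite big_distrr; apply: eq_bigr => z _ /=.
have -> : [forall i, rcons_ffun w' z (widen_ord (leqnSn N) i) == w i] = (w' == w).
  apply/forallP/eqP => [ww' | -> i]; last by rewrite rcons_ffun_widen.
  by apply/ffunP => i; have /eqP := ww' i; rewrite rcons_ffun_widen.
by case: (w' == w); rewrite ?mul1r ?mul0r.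
Qed.

Lemma sum_fwd_free_tail (A : nat -> pred T) i d :
  (forall k, (i < k)%N -> forall z, z \in A k) ->
  \sum_z fwd A (i + d) z = \sum_z fwd A i z.
Proof.
move=> Afree; elim: d => [|d IHd]; first by rewrite addn0.
rewrite addnS -IHd.
have Az z : z \in A (i + d).+1 by apply: Afree; rewrite ltnS leq_addr.
under eq_bigr do rewrite fwdS Az mul1r.
rewrite exchange_big; apply: eq_bigr => y _ /=.
by rewrite -big_distrr /= K_sum1 mulr1.
Qed.

Lemma pre_fwd_stationary (A : nat -> pred T) n :
  (forall k, (k < n)%N -> forall z, z \in A k) -> pre_fwd A n =1 f.
Proof.
elim: n => [|n IHn] Afree z //=.
rewrite -f_stationary; apply: eq_bigr => y _.
by rewrite Afree // IHn ?mul1r // => k lt_kn z'; apply: Afree; rewrite ltnW.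
Qed.

Lemma sum_fwd_single (A : nat -> pred T) n i :
  (i <= n)%N -> (forall k, k != i -> forall z, z \in A k) ->
  \sum_z fwd A n z = \sum_z (z \in A i)%:R * f z.
Proof.
move=> le_in Afree; rewrite -(subnKC le_in) sum_fwd_free_tail; last first.
  by move=> k lt_ik z; apply: Afree; rewrite gtn_eqF.
apply: eq_bigr => z _; rewrite /fwd pre_fwd_stationary // => k lt_ki.
by apply: Afree; rewrite ltn_eqF.
Qed.

End ChainLaw.

Lemma eq_Pr (R : realType) (S : finType) (q : joint_fdd R S) N
    (E1 E2 : pred {ffun 'I_N -> S * S}) :
  E1 =1 E2 -> Pr q E1 = Pr q E2.
Proof. by move=> E12; rewrite /Pr (eq_bigl _ _ E12). Qed.

Section Coupling.
Variables (R : realType) (S : finType) (p : S -> S -> R) (m : S -> R) (mu : S -> S -> R).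
Hypotheses (p_stoch : stochastic p) (m_invariant : invariant_measure p m)
  (m_full : full_support m) (pA : assumptionA p) (mu_M : in_M m mu).

Lemma p_ge0 x y : 0 <= p x y. Proof. by case: p_stoch. Qed.
Lemma p_sum1 x : \sum_y p x y = 1. Proof. by case: p_stoch. Qed.
Lemma m_neq0 x : m x != 0. Proof. by rewrite gt_eqF ?m_full. Qed.
Lemma m_stationary y : \sum_x m x * p x y = m y. Proof. by case: m_invariant => _ []. Qed.
Lemma m_sum1 : \sum_x m x = 1. Proof. by case: m_invariant => _ []. Qed.
Lemma mu_ge0 x y : 0 <= mu x y. Proof. by case: mu_M. Qed.
Lemma mu_sumr x : \sum_y mu x y = m x. Proof. by case: mu_M => _ []. Qed.
Lemma mu_suml y : \sum_x mu x y = m y. Proof. by case: mu_M => _ []. Qed.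

Lemma assumptionA_mixture :
  exists beta : R, forall x y, p x y = beta * m y + (x == y)%:R * (1 - beta).
Proof.
case: pA => alpha [_ [_ p_off]]; pose beta := \sum_y alpha y.
have pE x y : p x y = alpha y + (x == y)%:R * (1 - beta).
  have [->|neq_xy] := eqVneq x y; last by rewrite p_off 1?eq_sym // mul0r addr0.
  have := p_sum1 y; rewrite (bigD1 y) //= (eq_bigr alpha) => [p1|z nzy]; last first.
    by rewrite p_off.
  have : beta = alpha y + \sum_(z | z != y) alpha z by rewrite /beta (bigD1 y).
  rewrite mul1r; lra.
exists beta => x y; suff aE : alpha y = beta * m y by rewrite pE aE.
have := m_stationary y.
rewrite (eq_bigr (fun x => m x * alpha y + (x == y)%:R * (m x * (1 - beta)))); last first.
  by move=> x' _; rewrite pE; ring.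
rewrite big_split /= -big_distrl /= m_sum1 sum_indicator; lra.
Qed.

Definition kap_norm t s' := \sum_x mu x t * p x s'.

Lemma kap_norm_ge0 t s' : 0 <= kap_norm t s'.
Proof. by apply: sumr_ge0 => x _; rewrite mulr_ge0 ?mu_ge0 ?p_ge0. Qed.

(* The one place where Assumption A is used. *)
Lemma sum_kap_numer t s' : \sum_t' m t * p t t' * mu s' t' / m t' = kap_norm t s'.
Proof.
have [beta pE] := assumptionA_mixture.
transitivity (\sum_t' (m t * beta * mu s' t' + (t' == t)%:R * ((1 - beta) * mu s' t'))).
  apply: eq_bigr => t' _; rewrite pE eq_sym.
  by have [<-|_] := eqVneq t t'; rewrite /= ?mul1r ?mul0r ?addr0; field; apply: m_neq0.
rewrite big_split /= -big_distrr /= mu_sumr sum_indicator.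
rewrite /kap_norm.
rewrite (eq_bigr (fun x => mu x t * (beta * m s') + (x == s')%:R * (mu x t * (1 - beta))));
  last by move=> x _; rewrite pE; ring.
rewrite big_split /= -big_distrl /= mu_suml sum_indicator; ring.
Qed.

(* The conditional law of the new [t'] given the old [t] and the new [s'];
   the first branch is never charged, since then [(t, s')] has mass zero. *)
Definition kap t s' t' : R :=
  if kap_norm t s' == 0 then (t' == t)%:R
  else m t * p t t' * mu s' t' / (m t' * kap_norm t s').

Definition pairK (z z' : S * S) := p z.1 z'.1 * kap z.2 z'.1 z'.2.
Definition pair_init (z : S * S) := mu z.1 z.2.

Lemma kap_ge0 t s' t' : 0 <= kap t s' t'.
Proof.
rewrite /kap; case: ifP => _; first by rewrite ler0n.
by rewrite divr_ge0 ?mulr_ge0 ?p_ge0 ?mu_ge0 ?kap_norm_ge0 // ltW ?m_full.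
Qed.

Lemma pairK_ge0 z z' : 0 <= pairK z z'.
Proof. by rewrite mulr_ge0 ?p_ge0 ?kap_ge0. Qed.

Lemma kap_sum1 t s' : \sum_t' kap t s' t' = 1.
Proof.
have [nrm0|nz] := eqVneq (kap_norm t s') 0.
  under eq_bigr do rewrite /kap nrm0 eqxx -[_%:R]mulr1.
  exact: sum_indicator.
transitivity (\sum_t' (m t * p t t' * mu s' t' / m t') / kap_norm t s').
  by apply: eq_bigr => t' _; rewrite /kap (negbTE nz); field; rewrite m_neq0 nz.
by rewrite -big_distrl /= sum_kap_numer divff.
Qed.

Lemma sum_pairK_t z s' : \sum_t' pairK z (s', t') = p z.1 s'.
Proof. by rewrite /pairK /= -big_distrr /= kap_sum1 mulr1. Qed.

Lemma pairK_sum1 z : \sum_z' pairK z z' = 1.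
Proof. by rewrite sum_pair; under eq_bigr do rewrite sum_pairK_t; rewrite p_sum1. Qed.

Lemma sum_mu_pairK t s' t' :
  \sum_s mu s t * pairK (s, t) (s', t') = m t * p t t' * mu s' t' / m t'.
Proof.
rewrite /pairK /= (eq_bigr (fun s => mu s t * p s s' * kap t s' t')); last first.
  by move=> s _; rewrite mulrA.
rewrite -big_distrl /= -/(kap_norm t s') /kap.
have [nrm0|nz] := eqVneq (kap_norm t s') 0; last by field; rewrite m_neq0 nz.
rewrite nrm0 mul0r; apply/esym.
apply: (@psumr_eq0P _ _ predT (fun t' => m t * p t t' * mu s' t' / m t')) => //.
  by move=> x _; rewrite divr_ge0 ?mulr_ge0 ?p_ge0 ?mu_ge0 // ltW ?m_full.
by rewrite sum_kap_numer nrm0.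
Qed.

Lemma pair_init_ge0 z : 0 <= pair_init z. Proof. exact: mu_ge0. Qed.

Lemma pair_init_sum1 : \sum_z pair_init z = 1.
Proof. by rewrite sum_pair -m_sum1; apply: eq_bigr => s _; rewrite mu_sumr. Qed.

Lemma pair_init_stationary z' : \sum_z pair_init z * pairK z z' = pair_init z'.
Proof.
case: z' => s' t'; rewrite sum_pair exchange_big /=.
under eq_bigr do rewrite sum_mu_pairK.
rewrite /pair_init /= -!big_distrl /= m_stationary; field; exact: m_neq0.
Qed.

Local Notation fwdp := (fwd pair_init pairK).

Definition path_mass (a : nat -> S) n := path_prob p m [seq a k | k <- iota 0 n.+1].
Arguments path_mass : simpl never.

Lemma path_massS a n : path_mass a n.+1 = path_mass a n * p (a n) (a n.+1).
Proof.
have iotaS k : iota 0 k.+1 = rcons (iota 0 k) k by rewrite -addn1 iotaD cats1.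
by rewrite /path_mass !iotaS !map_rcons path_prob_rcons -map_rcons -iotaS.
Qed.

Lemma markov_law_inord n (x : {ffun 'I_n.+1 -> S}) :
  markov_law p m x = path_mass (fun k => x (inord k)) n.
Proof. by rewrite /markov_law -[[seq _ | i <- _]]/(codom x) codom_inord. Qed.

Lemma fwd_t_path (A : nat -> pred (S * S)) (a : nat -> S) n :
  (forall k, (k <= n)%N -> forall z, (z \in A k) = (z.2 == a k)) ->
  forall s t, fwdp A n (s, t) = (t == a n)%:R * path_mass a n * mu s t / m t.
Proof.
elim: n => [|n IHn] Aa s t.
  rewrite fwd0 Aa // /path_mass /pair_init /=.
  have [->|_] := eqVneq t (a 0%N); last by rewrite !mul0r.
  by rewrite !mul1r mulr1 mulrAC divff ?mul1r ?m_neq0.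
rewrite fwdS Aa // sum_pair exchange_big /=.
transitivity ((t == a n.+1)%:R * \sum_t0 (t0 == a n)%:R *
   (path_mass a n / m t0 * \sum_s0 mu s0 t0 * pairK (s0, t0) (s, t))).
  congr (_ * _); apply: eq_bigr => t0 _; rewrite !big_distrr /=.
  apply: eq_bigr => s0 _; rewrite IHn; first by ring.
  by move=> k le_kn; apply: Aa; rewrite ltnW.
rewrite sum_indicator sum_mu_pairK path_massS.
have [->|_] := eqVneq t (a n.+1); last by rewrite !mul0r.
by rewrite /=; field; rewrite !m_neq0.
Qed.

Lemma fwd_t_path_at (A : nat -> pred (S * S)) (a : nat -> S) (C : pred (S * S)) i :
  (forall k, (k <= i)%N -> forall z, (z \in A k) = (z.2 == a k) && ((k == i) ==> C z)) ->
  forall s t, fwdp A i (s, t) = (C (s, t))%:R * ((t == a i)%:R * path_mass a i * mu s t / m t).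
Proof.
move=> Aa s t; pose A0 k : pred (S * S) := fun z => z.2 == a k.
have pre_eq : pre_fwd pair_init pairK A i (s, t) = pre_fwd pair_init pairK A0 i (s, t).
  by apply: pre_fwd_local => k lt_ki z; rewrite Aa ?(ltnW lt_ki) // (ltn_eqF lt_ki) andbT.
rewrite -(@fwd_t_path A0 a i (fun k _ z => erefl)) /fwd pre_eq Aa // eqxx /=.
rewrite -[(s, t) \in A0 i]/(t == a i).
by case: (t == a i); case: (C (s, t)); rewrite /= ?mul1r ?mul0r.
Qed.

Lemma sum_fwd_t_path n i (A : nat -> pred (S * S)) (a : nat -> S) (C : pred (S * S)) :
  (i <= n)%N ->
  (forall k, (k <= i)%N -> forall z, (z \in A k) = (z.2 == a k) && ((k == i) ==> C z)) ->
  (forall k, (i < k)%N -> forall z, z \in A k) ->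
  \sum_z fwdp A n z = \sum_s (C (s, a i))%:R * path_mass a i * mu s (a i) / m (a i).
Proof.
move=> le_in Aa Afree; rewrite -(subnKC le_in) sum_fwd_free_tail //; last exact: pairK_sum1.
rewrite sum_pair; apply: eq_bigr => s _.
under eq_bigr do rewrite (fwd_t_path_at Aa).
transitivity (\sum_t (t == a i)%:R * ((C (s, t))%:R * path_mass a i * mu s t / m t)).
  by apply: eq_bigr => t _; ring.
by rewrite sum_indicator.
Qed.

Definition fwd_s (A : nat -> pred (S * S)) k s := \sum_t fwdp A k (s, t).

Lemma fwd_sS (A : nat -> pred (S * S)) k (B : pred S) :
  (forall z, (z \in A k.+1) = (z.1 \in B)) ->
  forall s', fwd_s A k.+1 s' = (s' \in B)%:R * \sum_s fwd_s A k s * p s s'.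
Proof.
move=> AB s'; rewrite /fwd_s.
under eq_bigr do rewrite fwdS AB /=.
rewrite -big_distrr /=; congr (_ * _).
rewrite exchange_big /=.
under eq_bigr do rewrite -big_distrr /= sum_pairK_t /=.
rewrite sum_pair; apply: eq_bigr => s _; rewrite big_distrl.
by apply: eq_bigr.
Qed.

(* After time [i] both constraint families only restrict [s], which moves by [p]
   alone, so a proportionality between their [s]-marginals propagates. *)
Lemma fwd_s_proportional (A A' : nat -> pred (S * S)) i (B : nat -> pred S) c c' :
  (forall k, (i < k)%N -> forall z,
     ((z \in A k) = (z.1 \in B k)) /\ ((z \in A' k) = (z.1 \in B k))) ->
  (forall s, fwd_s A i s * c' = fwd_s A' i s * c) ->
  forall d s, fwd_s A (i + d) s * c' = fwd_s A' (i + d) s * c.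
Proof.
move=> AB base; elim=> [|d IHd] s; first by rewrite addn0.
have lt_ik : (i < (i + d).+1)%N by rewrite ltnS leq_addr.
rewrite addnS (@fwd_sS A _ (B (i + d).+1)); last by move=> z; case: (AB _ lt_ik z).
rewrite (@fwd_sS A' _ (B (i + d).+1)); last by move=> z; case: (AB _ lt_ik z).
rewrite -!mulrA; congr (_ * _); rewrite !big_distrl; apply: eq_bigr => s0 _ /=.
by rewrite mulrAC IHd mulrAC.
Qed.

Lemma fwd_s_path (A : nat -> pred (S * S)) (x : nat -> S) n :
  (forall k, (k <= n)%N -> forall z, (z \in A k) = (z.1 == x k)) ->
  forall s, fwd_s A n s = (s == x n)%:R * path_mass x n.
Proof.
elim: n => [|n IHn] Ax s.
  rewrite /fwd_s; under eq_bigr do rewrite fwd0 Ax //=.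
  rewrite -big_distrr /= /pair_init /= mu_sumr /path_mass /= mulr1.
  by have [->|_] := eqVneq s (x 0%N); rewrite ?mul1r ?mul0r.
rewrite (@fwd_sS A n (pred1 (x n.+1))); last by move=> z; rewrite Ax.
have {}IHn : forall s, fwd_s A n s = (s == x n)%:R * path_mass x n.
  by apply: IHn => k le_kn z; apply: Ax; rewrite ltnW.
under eq_bigr do rewrite IHn -mulrA.
rewrite sum_indicator path_massS inE.
by have [->|_] := eqVneq s (x n.+1); rewrite ?mul1r ?mul0r.
Qed.

Lemma sum_fwd_s (A : nat -> pred (S * S)) n : \sum_z fwdp A n z = \sum_s fwd_s A n s.
Proof. exact: sum_pair. Qed.

Lemma fwd_s_t_prefix_ratio (A A' : nat -> pred (S * S)) (a : nat -> S) x i s :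
  (forall k, (k <= i)%N -> forall z, (z \in A k) = (z.2 == a k) && ((k == i) ==> (z.1 == x))) ->
  (forall k, (k < i)%N -> forall z, z \in A' k) ->
  (forall z, (z \in A' i) = (z.1 == x)) ->
  fwd_s A i s * m x = fwd_s A' i s * (path_mass a i * mu x (a i) / m (a i)).
Proof.
move=> Aa A'free A'i.
have fwdA t : fwdp A i (s, t) = (t == a i)%:R * ((s == x)%:R * (path_mass a i * mu s t / m t)).
  by rewrite (fwd_t_path_at Aa) /=; ring.
have fwdA' t : fwdp A' i (s, t) = (s == x)%:R * mu s t.
  by rewrite /fwd (pre_fwd_stationary pair_init_stationary A'free) A'i.
rewrite /fwd_s; under eq_bigr do rewrite fwdA.
under [in RHS]eq_bigr do rewrite fwdA'.
rewrite sum_indicator -big_distrr mu_sumr /=.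
by have [->|_] := eqVneq s x; rewrite ?mulr1n ?mulr0n; ring.
Qed.

Definition coupling : joint_fdd R S := fun N w => chain_mass pair_init pairK w.

Lemma Pr_coupling_rect n (E : pred {ffun 'I_n.+1 -> S * S}) (A : nat -> pred (S * S)) :
  (forall w, E w = [forall i, w i \in A i]) -> Pr coupling E = \sum_z fwdp A n z.
Proof. by move=> EA; rewrite /Pr (eq_bigl _ _ EA); apply: sum_chain_mass_rect1. Qed.

Lemma Pr_coupling0 (E : pred {ffun 'I_0 -> S * S}) w0 : E w0 -> Pr coupling E = 1.
Proof.
move=> Ew0; rewrite /Pr big_mkcond (big_ffun0 _ w0) /= Ew0.
by rewrite /coupling /chain_mass /codom /image_mem enum_ord0.
Qed.

Lemma coupling_consistent : is_consistent_law coupling.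
Proof.
split=> [N w|N w]; first by apply: chain_mass_ge0; [exact: pairK_ge0 | exact: pair_init_ge0].
by apply: chain_mass_consistent; [exact: pairK_sum1 | exact: pair_init_sum1].
Qed.

Lemma coupling_s_law N (x : {ffun 'I_N -> S}) :
  Pr coupling [pred w : {ffun 'I_N -> S * S} | [forall i, (w i).1 == x i]] = markov_law p m x.
Proof.
case: N x => [|n] x.
  rewrite (Pr_coupling0 (w0 := ffun0 (card_ord 0))) /markov_law ?enum_ord0 //.
  by apply/forallP => -[].
pose A k := [pred z : S * S | z.1 == x (inord k)].
rewrite (@Pr_coupling_rect n _ A); last first.
  by move=> w; apply: eq_forallb => i; rewrite inE inord_val.
rewrite sum_fwd_s.
under eq_bigr do rewrite (@fwd_s_path A (fun k => x (inord k)) n (fun k _ z => erefl)).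
by rewrite sum_indicator markov_law_inord.
Qed.

Lemma coupling_t_law N (y : {ffun 'I_N -> S}) :
  Pr coupling [pred w : {ffun 'I_N -> S * S} | [forall i, (w i).2 == y i]] = markov_law p m y.
Proof.
case: N y => [|n] y.
  rewrite (Pr_coupling0 (w0 := ffun0 (card_ord 0))) /markov_law ?enum_ord0 //.
  by apply/forallP => -[].
pose A k := [pred z : S * S | (k <= n)%N ==> (z.2 == y (inord k))].
rewrite (@Pr_coupling_rect n _ A); last first.
  by move=> w; apply: eq_forallb => i; rewrite inE -ltnS ltn_ord inord_val.
rewrite (@sum_fwd_t_path n n A (fun k => y (inord k)) xpredT) //; first last.
- by move=> k lt_nk z; rewrite inE leqNgt lt_nk.
- by move=> k le_kn z; rewrite inE le_kn implybT andbT.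
under eq_bigr do rewrite mul1r mulrAC.
by rewrite -big_distrr /= mu_suml mulfVK ?m_neq0 // markov_law_inord.
Qed.

Lemma coupling_pair_at N (i : 'I_N) (x y : S) :
  Pr coupling [pred w : {ffun 'I_N -> S * S} | w i == (x, y)] = mu x y.
Proof.
case: N i => [|n] i; first by case: i.
pose A k := [pred z : S * S | (k == val i)%N ==> (z == (x, y))].
rewrite (@Pr_coupling_rect n _ A); last first.
  by move=> w; rewrite /= (forall_at i (fun j => w j == (x, y))).
rewrite (@sum_fwd_single _ _ _ _ pairK_sum1 pair_init_stationary A n i).
- by under eq_bigr do rewrite inE eqxx /=; rewrite sum_indicator.
- by rewrite -ltnS ltn_ord.
- by move=> k nki z; rewrite inE (negbTE nki).
Qed.

Lemma coupling_s_at n (i : 'I_n.+1) x :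
  Pr coupling [pred w : {ffun 'I_n.+1 -> S * S} | (w i).1 == x] = m x.
Proof.
pose A k := [pred z : S * S | (k == val i)%N ==> (z.1 == x)].
rewrite (@Pr_coupling_rect n _ A); last first.
  by move=> w; rewrite /= (forall_at i (fun j => (w j).1 == x)).
rewrite (@sum_fwd_single _ _ _ _ pairK_sum1 pair_init_stationary A n i); first last.
- by move=> k nki z; rewrite inE (negbTE nki).
- by rewrite -ltnS ltn_ord.
under eq_bigr do rewrite inE eqxx /=.
rewrite sum_pair /pair_init /=; under eq_bigr do rewrite -big_distrr /= mu_sumr.
by rewrite sum_indicator.
Qed.

Lemma coupling_t_prefix_s_at n (i : 'I_n.+1) (a : {ffun 'I_n.+1 -> S}) x :
  Pr coupling [pred w : {ffun 'I_n.+1 -> S * S} |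
         [forall j : 'I_n.+1, (j <= i)%N ==> ((w j).2 == a j)] && ((w i).1 == x)]
  = path_mass (fun k => a (inord k)) i * mu x (a i) / m (a i).
Proof.
pose A k := [pred z : S * S |
  ((k <= i)%N ==> (z.2 == a (inord k))) && ((k == val i)%N ==> (z.1 == x))].
rewrite (@Pr_coupling_rect n _ A); last first.
  move=> w; rewrite /= (forall_at i (fun j => (w j).1 == x)) forall_andb.
  by apply: eq_forallb => j; rewrite inE inord_val.
rewrite (@sum_fwd_t_path n i A (fun k => a (inord k)) (fun z => z.1 == x)); first last.
- by move=> k lt_ik z; rewrite inE leqNgt lt_ik (gtn_eqF lt_ik).
- by move=> k le_ki z; rewrite inE le_ki.
- by rewrite -ltnS ltn_ord.
under eq_bigr do rewrite -!mulrA.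
by rewrite sum_indicator inord_val !mulrA.
Qed.

Lemma coupling_t_prefix n (i : 'I_n.+1) (a : {ffun 'I_n.+1 -> S}) :
  Pr coupling [pred w : {ffun 'I_n.+1 -> S * S} |
         [forall j : 'I_n.+1, (j <= i)%N ==> ((w j).2 == a j)]]
  = path_mass (fun k => a (inord k)) i.
Proof.
pose A k := [pred z : S * S | (k <= i)%N ==> (z.2 == a (inord k))].
rewrite (@Pr_coupling_rect n _ A); last first.
  by move=> w; apply: eq_forallb => j; rewrite inE inord_val.
rewrite (@sum_fwd_t_path n i A (fun k => a (inord k)) xpredT); first last.
- by move=> k lt_ik z; rewrite inE leqNgt lt_ik.
- by move=> k le_ki z; rewrite inE le_ki implybT andbT.
- by rewrite -ltnS ltn_ord.
under eq_bigr do rewrite mul1r mulrAC.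
by rewrite -big_distrr /= mu_suml mulfVK ?m_neq0.
Qed.

Lemma coupling_cond_s N (i : 'I_N) (a : {ffun 'I_N -> S}) (x : S) :
  Pr coupling [pred w : {ffun 'I_N -> S * S} | ((w i).1 == x) &&
                 [forall j : 'I_N, (j <= i)%N ==> ((w j).2 == a j)]]
  = mu_cond m mu x (a i) *
    Pr coupling [pred w : {ffun 'I_N -> S * S} |
                 [forall j : 'I_N, (j <= i)%N ==> ((w j).2 == a j)]].
Proof.
case: N i a => [|n] i a; first by case: i.
rewrite (eq_Pr _ (E2 := [pred w : {ffun 'I_n.+1 -> S * S} |
   [forall j : 'I_n.+1, (j <= i)%N ==> ((w j).2 == a j)] && ((w i).1 == x)])); last first.
  by move=> w; rewrite /= andbC.
rewrite coupling_t_prefix_s_at coupling_t_prefix /mu_cond; field; exact: m_neq0.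
Qed.

Lemma coupling_s_markov N (i : 'I_N) (a b : {ffun 'I_N -> S}) (x : S) :
  let A := fun w : {ffun 'I_N -> S * S} =>
             [forall j : 'I_N, (j <= i)%N ==> ((w j).2 == a j)] in
  let X := fun w : {ffun 'I_N -> S * S} => (w i).1 == x in
  let B := fun w : {ffun 'I_N -> S * S} =>
             [forall j : 'I_N, (i < j)%N ==> ((w j).1 == b j)] in
  Pr coupling [pred w : {ffun 'I_N -> S * S} | [&& A w, X w & B w]] *
    Pr coupling [pred w : {ffun 'I_N -> S * S} | X w]
  = Pr coupling [pred w : {ffun 'I_N -> S * S} | A w && X w] *
    Pr coupling [pred w : {ffun 'I_N -> S * S} | X w && B w].
Proof.
case: N i a b => [|n] i a b; first by case: i.
rewrite /= coupling_s_at coupling_t_prefix_s_at.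
pose AXB k := [pred z : S * S | [&& (k <= i)%N ==> (z.2 == a (inord k)),
   (k == val i)%N ==> (z.1 == x) & (i < k)%N ==> (z.1 == b (inord k))]].
pose XB k := [pred z : S * S |
   ((k == val i)%N ==> (z.1 == x)) && ((i < k)%N ==> (z.1 == b (inord k)))].
rewrite (@Pr_coupling_rect n _ AXB); last first.
  move=> w; rewrite /= (forall_at i (fun j => (w j).1 == x)) !forall_andb.
  by apply: eq_forallb => j; rewrite inE !inord_val.
rewrite (@Pr_coupling_rect n _ XB); last first.
  move=> w; rewrite /= (forall_at i (fun j => (w j).1 == x)) !forall_andb.
  by apply: eq_forallb => j; rewrite inE !inord_val.
have base s0 : fwd_s AXB i s0 * m x =
    fwd_s XB i s0 * (path_mass (fun k => a (inord k)) i * mu x (a (inord i)) / m (a (inord i))).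
  apply: (@fwd_s_t_prefix_ratio _ _ (fun k => a (inord k))) => [k le_ki z|k lt_ki z|z].
  - by rewrite inE le_ki ltnNge le_ki /= andbT.
  - by rewrite inE (ltn_eqF lt_ki) ltnNge (ltnW lt_ki).
  - by rewrite inE eqxx ltnn /= andbT.
rewrite inord_val in base.
have tails k : (i < k)%N -> forall z,
    ((z \in AXB k) = (z.1 \in pred1 (b (inord k)))) /\
    ((z \in XB k) = (z.1 \in pred1 (b (inord k)))).
  by move=> lt_ik z; rewrite !inE leqNgt lt_ik (gtn_eqF lt_ik).
have le_in : (i <= n)%N by rewrite -ltnS ltn_ord.
rewrite !sum_fwd_s big_distrl [RHS]mulrC big_distrl /=; apply: eq_bigr => s _.
by have := fwd_s_proportional tails base (n - i) s; rewrite subnKC.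
Qed.

End Coupling.

Unset Implicit Arguments.
Set Strict Implicit.
Theorem lemma4 (R : realType) (S : finType) (p : S -> S -> R) (m : S -> R)
  (mu : S -> S -> R) :
  stochastic p -> irreducible p -> aperiodic p ->
  invariant_measure p m -> full_support m ->
  assumptionA p -> in_M m mu ->
  exists q : joint_fdd R S,
    is_consistent_law q /\
    (* the s-component is the given Markov chain (enlargement) *)
    (forall N (x : {ffun 'I_N -> S}),
       Pr q [pred w : {ffun 'I_N -> S * S} | [forall i, (w i).1 == x i]] = markov_law p m x) /\
    (* (P1) *)
    (forall N (i : 'I_N) (a b : {ffun 'I_N -> S}) (x : S),
       let A := fun w : {ffun 'I_N -> S * S} =>
                  [forall j : 'I_N, (j <= i)%N ==> ((w j).2 == a j)] in
       let X := fun w : {ffun 'I_N -> S * S} => (w i).1 == x in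
       let B := fun w : {ffun 'I_N -> S * S} =>
                  [forall j : 'I_N, (i < j)%N ==> ((w j).1 == b j)] in
       Pr q [pred w : {ffun 'I_N -> S * S} | [&& A w, X w & B w]] * Pr q [pred w : {ffun 'I_N -> S * S} | X w]
       = Pr q [pred w : {ffun 'I_N -> S * S} | A w && X w] * Pr q [pred w : {ffun 'I_N -> S * S} | X w && B w]) /\
    (* (P2) *)
    (forall N (y : {ffun 'I_N -> S}),
       Pr q [pred w : {ffun 'I_N -> S * S} | [forall i, (w i).2 == y i]] = markov_law p m y) /\
    (* (P3) *)
    (forall N (i : 'I_N) (x y : S),
       Pr q [pred w : {ffun 'I_N -> S * S} | w i == (x, y)] = mu x y) /\
    (* (P4) *)
    (forall N (i : 'I_N) (a : {ffun 'I_N -> S}) (x : S),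
       Pr q [pred w : {ffun 'I_N -> S * S} | ((w i).1 == x) &&
                      [forall j : 'I_N, (j <= i)%N ==> ((w j).2 == a j)]]
       = mu_cond m mu x (a i) *
         Pr q [pred w : {ffun 'I_N -> S * S} | [forall j : 'I_N, (j <= i)%N ==> ((w j).2 == a j)]]).
Proof.
move=> p_stoch _ _ m_inv m_full pA mu_M.
exists (coupling p m mu); split; first exact: coupling_consistent.
split; first exact: coupling_s_law.
split; first exact: coupling_s_markov.
split; first exact: coupling_t_law.
split; first exact: coupling_pair_at.
exact: coupling_cond_s.
Qed.
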